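(* Let $\{(R_n,B_n)\}_{n=1}^\infty\subseteq\mathcal{D}_d$ and let $\nu=\delta_{R_1^{-1}B_1}*\delta_{(R_2R_1)^{-1}B_2}*\cdots*\delta_{(R_n\cdots R_1)^{-1}B_n}*\cdots$ be the corresponding infinite convolution. Then $\mathcal{Z}(\nu)=\emptyset$.
   Context: $\mathcal{D}_d$ is the set of pairs $(R,B)$ with $R=\mathrm{diag}(m_1,\dots,m_d)$, $m_1,\dots,m_d\ge2$ integers, and $B$ a nonempty subset of $\{0,\dots,m_1-1\}\times\cdots\times\{0,\dots,m_d-1\}$. For finite $A$, $\delta_A=\frac{1}{\#A}\sum_{a\in A}\delta_a$; the infinite convolution is the weak limit (which exists for sequences in $\mathcal{D}_d$) of the finite convolutions $\delta_{R_1^{-1}B_1}*\cdots*\delta_{(R_n\cdots R_1)^{-1}B_n}$. $\mathcal{Z}(\nu)=\{\xi\in\mathbb{R}^d:\widehat{\nu}(\xi+k)=0\text{ for all }k\in\mathbb{Z}^d\}$ where $\widehat{\nu}(\xi)=\int e^{-2\pi i\xi\cdot x}d\nu(x)$. *)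

From HB Require Import structures.
From mathcomp Require Import all_boot all_order all_algebra.
From mathcomp Require Import all_classical all_reals all_analysis.
Set Implicit Arguments. Unset Strict Implicit. Unset Printing Implicit Defensive.
Import Order.TTheory GRing.Theory Num.Theory.
Import numFieldNormedType.Exports.
Local Open Scope classical_set_scope.
Local Open Scope ring_scope.

(* Points of R^d are d-tuples of reals; [d.-tuple R] carries the product
   (= Borel) sigma-algebra of the library. *)

Definition vadd (R : realType) (d : nat) (x y : d.-tuple R) : d.-tuple R :=
  [tuple tnth x i + tnth y i | i < d].

Definition vzero (R : realType) (d : nat) : d.-tuple R := [tuple 0 | i < d].

Definition vdot (R : realType) (d : nat) (x y : d.-tuple R) : R :=
  \sum_(i < d) tnth x i * tnth y i.

(* (R_{n+1} ... R_1)^{-1} b  where R_k = diag (m (k-1) 0, ..., m (k-1) (d-1)),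
   i.e. the sequence (R_k) is indexed from 0: R_{k+1} = diag (m k). *)
Definition scaled_digit (R : realType) (d : nat) (m : nat -> 'I_d -> nat)
  (n : nat) (b : d.-tuple nat) : d.-tuple R :=
  [tuple (tnth b i)%:R / (\prod_(k < n.+1) (m k i)%:R) | i < d].

(* Integral of f against the finite convolution
     delta_{R_1^{-1} B_1} * ... * delta_{(R_n ... R_1)^{-1} B_n}
   (with B_{k+1} = B k), where delta_A is the uniform probability on the finite
   set A.  For n = 0 this is the Dirac mass at 0.  Unfolding the definition,
   the integral is the average of f (sum_k (R_k...R_1)^{-1} b_k) over all
   choices b_k in B_k; we compute it by nested averages. *)
Fixpoint fin_conv_integral (R : realType) (d : nat) (m : nat -> 'I_d -> nat)
  (B : nat -> seq (d.-tuple nat)) (n : nat) (f : d.-tuple R -> R) : R :=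
  match n with
  | 0 => f (vzero R d)
  | n'.+1 => fin_conv_integral m B n'
      (fun x => (size (B n'))%:R^-1 *
                \sum_(b <- B n') f (vadd x (scaled_digit R m n' b)))
  end.

Definition continuous_Rd (R : realType) (d : nat) (f : d.-tuple R -> R) : Prop :=
  forall (x : d.-tuple R) (e : R), 0 < e -> exists2 del : R, 0 < del &
    forall y : d.-tuple R, (forall i : 'I_d, `|tnth x i - tnth y i| < del) ->
      `|f x - f y| < e.

Definition bounded_Rd (R : realType) (d : nat) (f : d.-tuple R -> R) : Prop :=
  exists M : R, forall x, `|f x| <= M.

Definition is_infinite_convolution (R : realType) (d : nat)
  (m : nat -> 'I_d -> nat) (B : nat -> seq (d.-tuple nat))
  (nu : probability (d.-tuple R) R) : Prop :=
  forall f : d.-tuple R -> R, measurable_fun setT f -> continuous_Rd f ->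
    bounded_Rd f ->
    (fun n => fin_conv_integral m B n f) @ \oo --> Rintegral nu setT f.

(* hat nu (xi) = \int exp(-2 pi i xi.x) dnu(x) = 0, i.e. both the real part
   \int cos(2 pi xi.x) dnu and the imaginary part -\int sin(2 pi xi.x) dnu
   vanish. *)
Definition fourier_vanishes (R : realType) (d : nat)
  (nu : probability (d.-tuple R) R) (xi : d.-tuple R) : Prop :=
  Rintegral nu setT (fun x => cos (2 * pi * vdot xi x)) = 0 /\
  Rintegral nu setT (fun x => sin (2 * pi * vdot xi x)) = 0.

Definition Zset (R : realType) (d : nat) (nu : probability (d.-tuple R) R)
  : set (d.-tuple R) :=
  [set xi | forall k : d.-tuple int,
      fourier_vanishes nu (vadd xi [tuple (tnth k i)%:~R | i < d])].

(* (R_{n+1}, B_{n+1}) = (diag (m n), B n) belongs to D_d *)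
Definition in_Dd (d : nat) (mn : 'I_d -> nat) (Bn : seq (d.-tuple nat)) : Prop :=
  (forall i, (2 <= mn i)%N) /\ uniq Bn /\ Bn != [::] /\
  (forall b, b \in Bn -> forall i, (tnth b i < mn i)%N).

(* Suppose hat nu vanishes on xi + Z^d.  Then nu annihilates every "wave"
   x |-> a cos (2 pi (xi + k) . x + b), k in Z^d, hence every function
     Phi x = sum_t prod_i F (x_i - t_i) * cos (2 pi xi . (t - x)),
   where t runs over a grid of mesh 1 / (K + 1) in a unit cube and F is the
   Fejer kernel of order K: Phi is a wave times a Z^d-periodic trigonometric
   polynomial.  Since the F (x_i - t_i) form a partition of unity concentrated
   near x_i, Phi >= cos 1 - O(eps) on a window W = prod [c_i, c_i + 1 - 4 eta_i]
   and Phi >= -1 everywhere.  On the other hand, no digit is both 0 and m - 1,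
   so after finitely many steps of the convolution one of the two faces
   x_i = 0, x_i = 1 carries mass at most eps; shifting W slightly away from that
   face, nu (complement of W) = O(eps).  Hence 0 = int Phi dnu >= cos 1 - O(eps) > 0. *)

From HB Require Import structures.
From mathcomp Require Import all_boot all_order all_algebra.
From mathcomp Require Import all_classical all_reals all_analysis.
From mathcomp Require Import measurable_realfun ring lra.
Set Implicit Arguments. Unset Strict Implicit. Unset Printing Implicit Defensive.
Import Order.TTheory GRing.Theory Num.Theory.
Import numFieldNormedType.Exports.
Local Open Scope classical_set_scope.
Local Open Scope ring_scope.

Section Trigonometry.
Variable R : realType.
Implicit Types u v h x y : R.

Lemma sinD_sub_sinB u h : sin (u + h) - sin (u - h) = 2 * sin h * cos u.
Proof. rewrite sinD sinB; ring. Qed.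

Lemma cosB_sub_cosD u h : cos (u - h) - cos (u + h) = 2 * sin h * sin u.
Proof. rewrite cosB cosD; ring. Qed.

Lemma sum_cos_arith x h (M : nat) :
  2 * sin h * \sum_(s < M) cos (x + s%:R * (2 * h)) =
  sin (x + M%:R * (2 * h) - h) - sin (x - h).
Proof.
pose u (s : nat) := sin (x + s%:R * (2 * h) - h).
have -> : sin (x + M%:R * (2 * h) - h) - sin (x - h) = \sum_(0 <= s < M) (u s.+1 - u s).
  by rewrite telescope_sumr // /u mul0r addr0.
rewrite mulr_sumr big_mkord; apply: eq_bigr => s _.
by rewrite -sinD_sub_sinB /u -natr1; congr (sin _ - sin _); ring.
Qed.

Lemma sum_sin_arith x h (M : nat) :
  2 * sin h * \sum_(s < M) sin (x + s%:R * (2 * h)) =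
  cos (x - h) - cos (x + M%:R * (2 * h) - h).
Proof.
pose u (s : nat) := cos (x + s%:R * (2 * h) - h).
have -> : cos (x - h) - cos (x + M%:R * (2 * h) - h) = - \sum_(0 <= s < M) (u s.+1 - u s).
  by rewrite telescope_sumr // /u mul0r addr0 opprB.
rewrite mulr_sumr big_mkord -sumrN; apply: eq_bigr => s _.
by rewrite -cosB_sub_cosD /u opprB -natr1; congr (cos _ - cos _); ring.
Qed.

Lemma sinD2pin x (n : nat) : sin (x + 2 * pi * n%:R) = sin x.
Proof. by rewrite mulr_natr mulr_natl (periodicn (@sinD2pi R)). Qed.

Lemma sinB2pin x (n : nat) : sin (x - 2 * pi * n%:R) = sin x.
Proof. by rewrite -[in RHS](subrK (2 * pi * n%:R) x) sinD2pin. Qed.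

Lemma cosB2pi x : cos (x - 2 * pi) = cos x.
Proof. by rewrite -[in RHS](subrK (2 * pi) x) [2 * pi]mulrC mulr_natr cosD2pi. Qed.

Lemma sin_frac_neq0 (j j' M : nat) : j != j' -> (j < M)%N -> (j' < M)%N ->
  sin (pi * (j%:R - j'%:R) / M%:R) != 0 :> R.
Proof.
move=> jj' jM j'M.
have M0 : 0 < M%:R :> R by rewrite ltr0n; apply: leq_ltn_trans jM.
wlog lt_j'j : j j' jj' jM j'M / (j' < j)%N.
  move=> wlog_lt; case: (ltngtP j' j) => [|lt_jj'|eq_jj']; first exact: wlog_lt.
  - rewrite -opprB mulrN mulNr sinN oppr_eq0.
    by apply: wlog_lt; rewrite // eq_sym.
  - by rewrite eq_jj' eqxx in jj'.
have pos : 0 < j%:R - j'%:R :> R by rewrite subr_gt0 ltr_nat.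
rewrite gt_eqF // sin_gt0_pi // divr_gt0 ?mulr_gt0 ?pi_gt0 //=.
rewrite ltr_pdivrMr // mulrC [pi * _]mulrC ltr_pM2r ?pi_gt0 //.
by rewrite ltrBlDr (lt_le_trans (y := M%:R)) ?ltr_nat // lerDl.
Qed.

(* The [M]-th roots of unity [exp (2 i pi (j - j') s / M)] sum to zero. *)
Lemma sum_cos_frac_eq0 x (M j j' : nat) : j != j' -> (j < M)%N -> (j' < M)%N ->
  \sum_(s < M) cos (x + 2 * pi * (j%:R - j'%:R) * s%:R / M%:R) = 0.
Proof.
move=> jj' jM j'M; pose h : R := pi * (j%:R - j'%:R) / M%:R.
have M0 : M%:R != 0 :> R by rewrite pnatr_eq0 -lt0n; apply: leq_ltn_trans jM.
have sh0 : 2 * sin h != 0 by rewrite mulf_neq0 ?pnatr_eq0 ?sin_frac_neq0.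
apply: (mulfI sh0); rewrite mulr0.
rewrite (eq_bigr (fun s : 'I_M => cos (x + s%:R * (2 * h)))); last first.
  by move=> s _; congr cos; rewrite /h; field.
rewrite sum_cos_arith.
have -> : x + M%:R * (2 * h) - h = x - h + 2 * pi * j%:R - 2 * pi * j'%:R.
  by rewrite /h; field.
by rewrite sinB2pin sinD2pin subrr.
Qed.

Lemma double_sum_cos K x :
  \sum_(j < K.+1) \sum_(j' < K.+1) cos ((j%:R - j'%:R) * x) =
  (\sum_(j < K.+1) cos (j%:R * x)) ^+ 2 + (\sum_(j < K.+1) sin (j%:R * x)) ^+ 2.
Proof.
rewrite !expr2 !big_distrl /= -big_split /=; apply: eq_bigr => j _.
rewrite !big_distrr /= -big_split /=; apply: eq_bigr => j' _.
by rewrite mulrBl cosB.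
Qed.

Lemma double_sum_cos_ge0 K x :
  0 <= \sum_(j < K.+1) \sum_(j' < K.+1) cos ((j%:R - j'%:R) * x).
Proof. by rewrite double_sum_cos addr_ge0 ?sqr_ge0. Qed.

(* Fejer's estimate, obtained by summing the two arithmetic progressions. *)
Lemma double_sum_cos_le K x :
  (\sum_(j < K.+1) \sum_(j' < K.+1) cos ((j%:R - j'%:R) * x)) * (1 - cos x) <= 2.
Proof.
set h := x / 2; have xE : x = 2 * h by rewrite /h; field.
set A := K.+1%:R * (2 * h) - h.
have sumC : 2 * sin h * \sum_(j < K.+1) cos (j%:R * x) = sin A + sin h.
  have := sum_cos_arith 0 h K.+1; rewrite !add0r sinN opprK xE => <-.
  by congr (_ * _); apply: eq_bigr => j _; rewrite add0r.
have sumS : 2 * sin h * \sum_(j < K.+1) sin (j%:R * x) = cos h - cos A.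
  have := sum_sin_arith 0 h K.+1; rewrite !add0r cosN xE => <-.
  by congr (_ * _); apply: eq_bigr => j _; rewrite add0r.
have cosx : cos x = 1 - 2 * sin h ^+ 2.
  have -> : x = h + h by rewrite /h; field.
  by rewrite cosD; have := cos2Dsin2 h; rewrite !expr2; lra.
have bound : (sin A + sin h) ^+ 2 + (cos h - cos A) ^+ 2 <= 4.
  have := cos2Dsin2 A; have := cos2Dsin2 h; have := cos_geN1 (A + h).
  rewrite cosD !expr2; nra.
rewrite double_sum_cos cosx.
have -> : forall C S : R, (C ^+ 2 + S ^+ 2) * (1 - (1 - 2 * sin h ^+ 2)) =
    ((2 * sin h * C) ^+ 2 + (2 * sin h * S) ^+ 2) / 2.
  by move=> C S; field.
rewrite sumC sumS; lra.
Qed.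

Lemma ler_cos2pi u v : 0 <= u <= v -> v <= 1 / 2 ->
  cos (2 * pi * v) <= cos (2 * pi * u).
Proof.
move=> /andP[u0 uv] v2; have pi0 := pi_gt0 R.
have in0pi (w : R) : 0 <= w <= 1 / 2 -> 2 * pi * w \in `[0, pi].
  move=> /andP[w0 w2]; rewrite in_itv /=; apply/andP; split; last by nra.
  by rewrite !mulr_ge0 // ltW.
case: (ltgtP u v) uv => // [ltuv _|-> //].
rewrite ltW // ltr_cos ?in0pi ?ltr_pM2l ?mulr_gt0 ?u0 ?v2 //=.
- by rewrite (le_trans (ltW ltuv)).
- by rewrite (le_trans u0 (ltW ltuv)).
Qed.

Lemma cos2pi_le_far (eta : R) y : 0 < eta -> eta <= `|y| -> `|y| <= 1 - eta ->
  cos (2 * pi * y) <= cos (2 * pi * eta).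
Proof.
move=> eta0 ley gey.
have -> : cos (2 * pi * y) = cos (2 * pi * `|y|).
  by case: (ler0P y) => _ //; rewrite mulrN cosN.
have [yhalf|yhalf] := lerP `|y| (1 / 2); first by apply: ler_cos2pi => //; rewrite ley andbT ltW.
rewrite -cosB2pi -cosN (_ : - _ = 2 * pi * (1 - `|y|)); last by ring.
rewrite ler_cos2pi //; lra.
Qed.

Lemma one_sub_cos2pi_gt0 (eta : R) : 0 < eta <= 1 / 2 -> 0 < 1 - cos (2 * pi * eta).
Proof.
move=> /andP[eta0 eta2]; have pi0 := pi_gt0 R.
rewrite subr_gt0 -[X in _ < X]cos0 ltr_cos ?mulr_gt0 //.
- by rewrite in_itv /= lexx; apply: ltW.
- by rewrite in_itv /= ltW ?mulr_gt0 //=; nra.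
Qed.

Lemma cos1_le_cos u : `|u| <= 1 -> cos 1 <= cos u.
Proof.
move=> u1; rewrite -[cos u]cos_norm; have pi2 := pi_ge2 R.
move: u1; rewrite le_eqVlt => /orP[/eqP -> //|lt1].
by rewrite ltW // ltr_cos // in_itv /= ?normr_ge0 ?ler01 /=; lra.
Qed.

End Trigonometry.

Section Fejer.
Variables (R : realType) (K : nat).

Definition fejer (y : R) : R :=
  ((K.+1)%:R ^+ 2)^-1 *
  \sum_(j < K.+1) \sum_(j' < K.+1) cos ((j%:R - j'%:R) * (2 * pi * y)).

Lemma fejer_ge0 y : 0 <= fejer y.
Proof. by rewrite mulr_ge0 ?double_sum_cos_ge0. Qed.

Definition grid (a : R) (s : 'I_K.+1) : R := a + s%:R / (K.+1)%:R.

Lemma sum_fejer_grid y a : \sum_(s < K.+1) fejer (y - grid a s) = 1.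
Proof.
have K0 : (K.+1)%:R != 0 :> R by rewrite pnatr_eq0.
rewrite -mulr_sumr.
rewrite (eq_bigr (fun s : 'I_K.+1 => \sum_(j < K.+1) \sum_(j' < K.+1)
    cos ((j%:R - j'%:R) * (2 * pi * (y - a)) +
         2 * pi * (j'%:R - j%:R) * s%:R / (K.+1)%:R)));
  last by move=> s _; do 2![apply: eq_bigr => ? _]; congr cos; rewrite /grid; field.
rewrite exchange_big /= (eq_bigr (fun=> (K.+1)%:R)); last first.
  move=> j _; rewrite exchange_big /= (bigD1 j) //= [X in _ + X]big1 => [|j' j'j].
    rewrite addr0 (eq_bigr (fun=> 1)) => [|s _].
      by rewrite sumr_const card_ord.
    by rewrite subrr !(mul0r, mulr0) addr0 cos0.
  exact: sum_cos_frac_eq0.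
by rewrite sumr_const card_ord -[X in _ * X]mulr_natr -expr2 mulVf // expf_neq0.
Qed.

Lemma fejer_far y eta : 0 < eta <= 1 / 2 -> eta <= `|y| -> `|y| <= 1 - eta ->
  fejer y <= 2 / ((K.+1)%:R ^+ 2 * (1 - cos (2 * pi * eta))).
Proof.
move=> eta_bnd ley gey; have oc := one_sub_cos2pi_gt0 eta_bnd.
have cf := cos2pi_le_far (proj1 (andP eta_bnd)) ley gey.
have bound := double_sum_cos_le K (2 * pi * y).
have Q0 := double_sum_cos_ge0 K (2 * pi * y).
set Q := \sum_(j < K.+1) _ in bound Q0.
have K0 : 0 < (K.+1)%:R ^+ 2 :> R by rewrite exprn_gt0 ?ltr0n.
have -> : 2 / ((K.+1)%:R ^+ 2 * (1 - cos (2 * pi * eta))) =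
    ((K.+1)%:R ^+ 2)^-1 * (2 / (1 - cos (2 * pi * eta))).
  by field; rewrite !gt_eqF.
rewrite /fejer -/Q ler_pM2l ?invr_gt0 // ler_pdivlMr //; nra.
Qed.

End Fejer.

Section Averages.
Variables (R : realType) (T : eqType).
Implicit Types (s : seq T) (F : T -> R).

Lemma sum_nat_of_bool (a : pred T) s : \sum_(b <- s) ((a b)%:R : R) = (count a s)%:R.
Proof.
by rewrite -sum1_count natr_sum [RHS]big_mkcond; apply: eq_bigr => b _; case: (a b).
Qed.

Lemma avg_bound_count s F (a : pred T) (M : R) :
  (forall b, b \in s -> 0 <= F b <= M * (a b)%:R) ->
  0 <= (size s)%:R^-1 * \sum_(b <- s) F b <= M * ((count a s)%:R / (size s)%:R).
Proof.
move=> bndF; rewrite mulr_ge0 ?big_seq ?sumr_ge0 //=; last by move=> b /bndF /andP[].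
rewrite (_ : M * _ = (size s)%:R^-1 * (M * (count a s)%:R)); last by ring.
rewrite ler_wpM2l // -sum_nat_of_bool mulr_sumr [X in _ <= X]big_seq.
by apply: ler_sum => b /bndF /andP[].
Qed.

Lemma avg_bound s F (M : R) : s != [::] ->
  (forall b, b \in s -> 0 <= F b <= M) ->
  0 <= (size s)%:R^-1 * \sum_(b <- s) F b <= M.
Proof.
move=> s0 bndF.
have s0' : (size s)%:R != 0 :> R by rewrite pnatr_eq0 size_eq0.
have := @avg_bound_count s F predT M.
by rewrite count_predT mulfV // [M * 1]mulr1; apply=> b /bndF.
Qed.

Lemma avg_eq0 s F : (forall b, b \in s -> F b = 0) ->
  (size s)%:R^-1 * \sum_(b <- s) F b = 0.
Proof. by move=> F0; rewrite big1_seq ?mulr0. Qed.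

End Averages.

Section FinConvolution.
Variables (R : realType) (d : nat) (m : nat -> 'I_d -> nat)
  (B : nat -> seq (d.-tuple nat)).
Notation fci := (@fin_conv_integral R d m B).

Lemma eq_fin_conv_integral n f g : f =1 g -> fci n f = fci n g.
Proof. by move=> fg; congr (fci n _); apply: funext. Qed.

Lemma fin_conv_integral_sum (I : Type) (r : seq I) n (F : I -> d.-tuple R -> R) :
  fci n (fun x => \sum_(j <- r) F j x) = \sum_(j <- r) fci n (F j).
Proof.
elim: n F => [//|n IHn] F /=; rewrite -IHn; apply: eq_fin_conv_integral => x.
by rewrite exchange_big /= mulr_sumr.
Qed.

Hypothesis mB_in_Dd : forall n, in_Dd (m n) (B n).

Lemma B_neq0 k : B k != [::].
Proof. by case: (mB_in_Dd k) => _ [_ []]. Qed.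

Variable i : 'I_d.

Lemma m_ge2 k : (2 <= m k i)%N.
Proof. by case: (mB_in_Dd k) => m2 _; apply: m2. Qed.

Lemma digit_lt k b : b \in B k -> (tnth b i < m k i)%N.
Proof. by case: (mB_in_Dd k) => _ [_ [_ ltbm]] /ltbm. Qed.

(* The [i]-th diagonal entry of [R_k ... R_1]. *)
Definition digit_scale (k : nat) : R := \prod_(j < k) (m j i)%:R.

Lemma digit_scaleS k : digit_scale k.+1 = digit_scale k * (m k i)%:R.
Proof. by rewrite /digit_scale big_ord_recr. Qed.

Lemma digit_scale_ge1 k : 1 <= digit_scale k.
Proof.
elim: k => [|k IHk]; first by rewrite /digit_scale big_ord0.
by rewrite digit_scaleS -[X in X <= _]mulr1 ler_pM // ler1n (leq_trans _ (m_ge2 k)).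
Qed.

Lemma digit_scale_gt0 k : 0 < digit_scale k.
Proof. exact: lt_le_trans ltr01 (digit_scale_ge1 k). Qed.

Lemma invr_digit_scale k : (digit_scale k)^-1 = (m k i)%:R * (digit_scale k.+1)^-1.
Proof.
rewrite digit_scaleS invfM mulrCA mulfV ?mulr1 //.
by rewrite pnatr_eq0 -lt0n (leq_trans _ (m_ge2 k)).
Qed.

Lemma inv_digit_scale_gt0 k : 0 < (digit_scale k)^-1.
Proof. by rewrite invr_gt0 digit_scale_gt0. Qed.

Lemma tnth_vadd_digit k y b :
  tnth (vadd y (scaled_digit R m k b)) i = tnth y i + (tnth b i)%:R * (digit_scale k.+1)^-1.
Proof. by rewrite !tnth_mktuple. Qed.

(* Contains the [i]-th coordinates of all atoms of the [k]-th finite convolution. *)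
Definition in_digit_box k (y : d.-tuple R) := 0 <= tnth y i <= 1 - (digit_scale k)^-1.

Lemma in_digit_box0 : in_digit_box 0 (vzero R d).
Proof. by rewrite /in_digit_box /digit_scale big_ord0 invr1 subrr tnth_mktuple lexx. Qed.

Lemma in_digit_boxS k y b : in_digit_box k y -> b \in B k ->
  in_digit_box k.+1 (vadd y (scaled_digit R m k b)).
Proof.
rewrite /in_digit_box tnth_vadd_digit (invr_digit_scale k).
move=> /andP[y0 y1] /digit_lt ltbm; have := inv_digit_scale_gt0 k.+1.
set u := (digit_scale k.+1)^-1 in y1 * => u0.
have : (tnth b i).+1%:R <= (m k i)%:R :> R by rewrite ler_nat.
rewrite -natr1 => lebm; have b0 : 0 <= (tnth b i)%:R :> R by [].
apply/andP; split; first by rewrite addr_ge0 // mulr_ge0 // ltW.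
nra.
Qed.

Definition top_freq k : R :=
  (count (fun b => tnth b i == (m k i).-1) (B k))%:R / (size (B k))%:R.
Definition bottom_freq k : R :=
  (count (fun b => tnth b i == 0%N) (B k))%:R / (size (B k))%:R.

Lemma top_freq_ge0 k : 0 <= top_freq k. Proof. by rewrite divr_ge0. Qed.
Lemma bottom_freq_ge0 k : 0 <= bottom_freq k. Proof. by rewrite divr_ge0. Qed.

(* A digit cannot be both [0] and [m_k - 1], and [p q <= ((p + q) / 2) ^ 2]. *)
Lemma top_bottom_freq_le k : top_freq k * bottom_freq k <= 1 / 4.
Proof.
rewrite /top_freq /bottom_freq; set q := count _ _; set p := count _ _.
set s := size _.
have leqps : (q + p <= s)%N.
  rewrite /q /p -count_predUI (_ : count (predI _ _) _ = 0%N) ?addn0 ?count_size //.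
  apply/eqP; rewrite -leqn0 leqNgt -has_count; apply/hasP => -[b _] /=.
  move=> /andP[/eqP top /eqP bot]; have := m_ge2 k.
  by rewrite -(prednK (ltnW (m_ge2 k))) -top bot.
have : q%:R + p%:R <= s%:R :> R by rewrite -natrD ler_nat.
have q0 : 0 <= q%:R :> R by []; have p0 : 0 <= p%:R :> R by [].
have [-> _|s0] := posnP s; first by rewrite invr0 !mulr0.
have {}s0 : 0 < s%:R :> R by rewrite ltr0n.
rewrite mulrACA -invfM ler_pdivrMr ?mulr_gt0 // => leqps'.
have : (q%:R + p%:R) * (q%:R + p%:R) <= s%:R * s%:R :> R by rewrite ler_pM ?addr_ge0.
have : 0 <= (q%:R - p%:R) ^+ 2 :> R by rewrite sqr_ge0.
rewrite expr2; lra.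
Qed.

(* Only atoms whose last digit is [m_k - 1] stay within [2 / (R_k ... R_1)_ii] of the
   face [x_i = 1]. *)
Lemma fin_conv_top_layer_le k g M : 0 <= M ->
  (forall y, in_digit_box k y -> [/\ 0 <= g y, g y <= M &
     (tnth y i <= 1 - 2 * (digit_scale k)^-1 -> g y = 0)]) ->
  fci k g <= M * \prod_(j < k) top_freq j.
Proof.
elim: k g M => [|k IHk] g M M0 bnd_g.
  by rewrite big_ord0 mulr1 /=; case: (bnd_g _ in_digit_box0).
rewrite big_ord_recr /= mulrA mulrAC; apply: IHk => [|y box_y].
  by rewrite mulr_ge0 ?top_freq_ge0.
have u0 := inv_digit_scale_gt0 k.+1.
have bndS b : b \in B k -> 0 <= g (vadd y (scaled_digit R m k b)) <=
    M * (tnth b i == (m k i).-1)%:R.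
  move=> bB; have [g0 gM g_eq0] := bnd_g _ (in_digit_boxS box_y bB).
  rewrite g0 /=; case: eqP => [_|ne]; first by rewrite mulr1.
  rewrite mulr0 g_eq0 // tnth_vadd_digit.
  have : ((tnth b i).+2 <= m k i)%N.
    by rewrite ltn_neqAle digit_lt // andbT; apply/eqP => E; apply: ne; rewrite -E.
  rewrite -(ler_nat R) -!natr1 -addrA => lebm.
  move: box_y => /andP[_]; rewrite (invr_digit_scale k).
  set u := (digit_scale k.+1)^-1 in u0 *; nra.
have [-> avg_le] := andP (avg_bound_count bndS); split=> // y_le.
apply: avg_eq0 => b bB; have [_ _] := bnd_g _ (in_digit_boxS box_y bB); apply.
have : ((tnth b i).+1 <= m k i)%N by apply: digit_lt.
rewrite -(ler_nat R) -natr1 tnth_vadd_digit => lebm.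
have b0 : 0 <= (tnth b i)%:R :> R by [].
move: y_le; rewrite (invr_digit_scale k); set u := (digit_scale k.+1)^-1 in u0 *; nra.
Qed.

Lemma fin_conv_top_le L t g M : 0 <= M ->
  (forall z, in_digit_box (L + t) z -> [/\ 0 <= g z, g z <= M &
     (tnth z i <= 1 - (digit_scale L)^-1 - (digit_scale (L + t))^-1 -> g z = 0)]) ->
  fci (L + t) g <= M * \prod_(j < L) top_freq j.
Proof.
elim: t g => [|t IHt] g M0 bnd_g.
  rewrite addn0 in bnd_g *; apply: fin_conv_top_layer_le => // y box_y.
  by have [g0 gM g_eq0] := bnd_g _ box_y; split=> // y_le; apply: g_eq0; lra.
rewrite addnS /=; apply: IHt => // z box_z.
have boxS b : b \in B (L + t) -> in_digit_box (L + t).+1 (vadd z (scaled_digit R m (L + t) b)).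
  exact: in_digit_boxS.
have bndS b : b \in B (L + t) -> 0 <= g (vadd z (scaled_digit R m (L + t) b)) <= M.
  by move=> /boxS; rewrite -addnS => /bnd_g[-> gM _].
have [-> avg_le] := andP (avg_bound (B_neq0 (L + t)) bndS); split=> // z_le.
apply: avg_eq0 => b bB; have := boxS _ bB; rewrite -addnS => /bnd_g[_ _]; apply.
have : ((tnth b i).+1 <= m (L + t) i)%N by apply: digit_lt.
rewrite -(ler_nat R) -natr1 tnth_vadd_digit addnS => lebm.
have u0 := inv_digit_scale_gt0 (L + t).+1.
move: z_le; rewrite (invr_digit_scale (L + t)); set u := (digit_scale (L + t).+1)^-1 in u0 *; nra.
Qed.

Lemma fin_conv_bottom_layer_le k g M : 0 <= M ->
  (forall y, in_digit_box k y -> [/\ 0 <= g y, g y <= M &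
     ((digit_scale k)^-1 <= tnth y i -> g y = 0)]) ->
  fci k g <= M * \prod_(j < k) bottom_freq j.
Proof.
elim: k g M => [|k IHk] g M M0 bnd_g.
  by rewrite big_ord0 mulr1 /=; case: (bnd_g _ in_digit_box0).
rewrite big_ord_recr /= mulrA mulrAC; apply: IHk => [|y box_y].
  by rewrite mulr_ge0 ?bottom_freq_ge0.
have u0 := inv_digit_scale_gt0 k.+1.
have bndS b : b \in B k -> 0 <= g (vadd y (scaled_digit R m k b)) <=
    M * (tnth b i == 0%N)%:R.
  move=> bB; have [g0 gM g_eq0] := bnd_g _ (in_digit_boxS box_y bB).
  rewrite g0 /=; case: eqP => [_|ne]; first by rewrite mulr1.
  rewrite mulr0 g_eq0 // tnth_vadd_digit.
  have : (1 <= tnth b i)%N by rewrite lt0n; apply/eqP.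
  rewrite -(ler_nat R) => le1b; move: box_y => /andP[y0 _].
  set u := (digit_scale k.+1)^-1 in u0 *; nra.
have [-> avg_le] := andP (avg_bound_count bndS); split=> // le_y.
apply: avg_eq0 => b bB; have [_ _] := bnd_g _ (in_digit_boxS box_y bB); apply.
have b0 : 0 <= (tnth b i)%:R :> R by [].
have m1 : 1 <= (m k i)%:R :> R by rewrite ler1n (leq_trans _ (m_ge2 k)).
move: le_y; rewrite tnth_vadd_digit (invr_digit_scale k).
set u := (digit_scale k.+1)^-1 in u0 *; nra.
Qed.

Lemma fin_conv_bottom_le L t g M : 0 <= M ->
  (forall z, in_digit_box (L + t) z -> [/\ 0 <= g z, g z <= M &
     ((digit_scale L)^-1 <= tnth z i -> g z = 0)]) ->
  fci (L + t) g <= M * \prod_(j < L) bottom_freq j.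
Proof.
elim: t g => [|t IHt] g M0 bnd_g.
  by rewrite addn0 in bnd_g *; apply: fin_conv_bottom_layer_le.
rewrite addnS /=; apply: IHt => // z box_z.
have boxS b : b \in B (L + t) -> in_digit_box (L + t).+1 (vadd z (scaled_digit R m (L + t) b)).
  exact: in_digit_boxS.
have bndS b : b \in B (L + t) -> 0 <= g (vadd z (scaled_digit R m (L + t) b)) <= M.
  by move=> /boxS; rewrite -addnS => /bnd_g[-> gM _].
have [-> avg_le] := andP (avg_bound (B_neq0 (L + t)) bndS); split=> // le_z.
apply: avg_eq0 => b bB; have := boxS _ bB; rewrite -addnS => /bnd_g[_ _]; apply.
have u0 := inv_digit_scale_gt0 (L + t).+1.
by rewrite tnth_vadd_digit (le_trans le_z) // lerDl mulr_ge0 // ltW.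
Qed.

End FinConvolution.

Section Integrability.
Variables (R : realType) (d : nat) (nu : probability (d.-tuple R) R).

Lemma bounded_integrable (f : d.-tuple R -> R) (M : R) :
  measurable_fun setT f -> (forall x, `|f x| <= M) ->
  nu.-integrable setT (EFin \o f).
Proof.
move=> mf bnd_f; apply: measurable_bounded_integrable => //.
  exact: le_lt_trans (probability_le1 nu measurableT) (ltry 1).
exists M; split; first exact: num_real.
by move=> M' ltMM' x _; apply: le_trans (bnd_f x) (ltW ltMM').
Qed.

Lemma measurable_vdot (w : d.-tuple R) : measurable_fun setT (vdot w).
Proof.
apply: measurable_sum => i; apply: measurable_funM; first exact: measurable_cst.
exact: measurable_tnth.
Qed.

Lemma integrable_trig_vdot (f : R -> R) (w : d.-tuple R) :
  continuous f -> (forall t, `|f t| <= 1) ->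
  nu.-integrable setT (EFin \o (fun x => f (2 * pi * vdot w x))).
Proof.
move=> cf bnd_f; apply: (bounded_integrable (M := 1)) => // {bnd_f}.
apply: measurableT_comp; first exact: continuous_measurable_fun.
by apply: measurable_funM; [exact: measurable_cst|exact: measurable_vdot].
Qed.

Lemma Rintegral_cst_probability (r : R) : Rintegral nu setT (fun=> r) = r.
Proof.
by rewrite Rintegral_cst // (congr1 fine (probability_setT nu)) mulr1.
Qed.

End Integrability.

Section WaveSpan.
Variables (R : realType) (d : nat) (xi : d.-tuple R).

Definition intr_tuple (k : d.-tuple int) : d.-tuple R := [tuple (tnth k i)%:~R | i < d].

Definition wave (a b : R) (k : d.-tuple int) (x : d.-tuple R) : R :=
  a * cos (2 * pi * vdot (vadd xi (intr_tuple k)) x + b).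

Definition wave_span (f : d.-tuple R -> R) :=
  exists l : seq (R * R * d.-tuple int), f = fun x => \sum_(r <- l) wave r.1.1 r.1.2 r.2 x.

Lemma wave_span_sum (I : Type) (r : seq I) (F : I -> d.-tuple R -> R) :
  (forall j, wave_span (F j)) -> wave_span (fun x => \sum_(j <- r) F j x).
Proof.
move=> spanF; elim: r => [|j r [l IHr]].
  by exists [::]; apply: funext => x; rewrite !big_nil.
have [l1 Fj] := spanF j; exists (l1 ++ l); apply: funext => x.
by rewrite big_cons big_cat Fj (congr1 (fun f => f x) IHr).
Qed.

Lemma wave_spanZ c f : wave_span f -> wave_span (fun x => c * f x).
Proof.
move=> [l ->]; exists [seq ((c * r.1.1, r.1.2), r.2) | r <- l].
by apply: funext => x; rewrite big_map mulr_sumr; apply: eq_bigr => r _; rewrite /wave mulrA.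
Qed.

Definition shift_tuple (k : d.-tuple int) (i : 'I_d) (l : int) : d.-tuple int :=
  [tuple tnth k j + (if j == i then l else 0) | j < d].

Lemma vdot_shift_tuple k i l x :
  vdot (vadd xi (intr_tuple (shift_tuple k i l))) x =
  vdot (vadd xi (intr_tuple k)) x + l%:~R * tnth x i.
Proof.
rewrite /vdot (bigD1 i) //= [in RHS](bigD1 i) //=.
rewrite (eq_bigr (fun j => tnth (vadd xi (intr_tuple k)) j * tnth x j)); last first.
  by move=> j /negbTE ji; rewrite !tnth_mktuple ji addr0.
by rewrite !tnth_mktuple eqxx rmorphD /=; ring.
Qed.

(* Product to sum: [cos A cos C = (cos (A + C) + cos (A - C)) / 2]. *)
Lemma wave_span_mul_cos f i (l : int) b : wave_span f ->
  wave_span (fun x => f x * cos (2 * pi * l%:~R * tnth x i + b)).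
Proof.
move=> [L ->].
exists (flatten [seq [:: ((r.1.1 / 2, r.1.2 + b), shift_tuple r.2 i l);
                        ((r.1.1 / 2, r.1.2 - b), shift_tuple r.2 i (- l))] | r <- L]).
apply: funext => x; rewrite big_flatten /= big_map big_distrl /=; apply: eq_bigr => r _.
rewrite !big_cons big_nil addr0 /wave !vdot_shift_tuple /=.
set A := 2 * pi * vdot (vadd xi (intr_tuple r.2)) x; set C := 2 * pi * l%:~R * tnth x i.
rewrite (_ : 2 * pi * (_ + l%:~R * tnth x i) + _ = A + r.1.2 + (C + b)); last first.
  by rewrite /A /C; ring.
rewrite (_ : 2 * pi * (_ + (- l)%:~R * tnth x i) + _ = A + r.1.2 - (C + b)); last first.
  by rewrite /A /C rmorphN /=; ring.
by rewrite [cos (_ + (C + b))]cosD [cos (_ - (C + b))]cosB; field.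
Qed.

Lemma wave_span_cos_diff (t : d.-tuple R) :
  wave_span (fun x => cos (2 * pi * \sum_(i < d) tnth xi i * (tnth t i - tnth x i))).
Proof.
exists [:: ((1, - (2 * pi * vdot xi t)), [tuple 0 | i < d])].
apply: funext => x; rewrite big_cons big_nil addr0 /wave mul1r -cosN.
have -> : vdot (vadd xi (intr_tuple [tuple 0 | i < d])) x = vdot xi x.
  by apply: eq_bigr => i _; rewrite !tnth_mktuple addr0.
congr cos; rewrite /vdot (_ : \sum_(i < d) _ * (_ - _) =
    \sum_(i < d) tnth xi i * tnth t i - \sum_(i < d) tnth xi i * tnth x i).
  by rewrite mulrBr opprB.
by rewrite -sumrB; apply: eq_bigr => i _; ring.
Qed.

Lemma wave_span_mul_fejer K f i c : wave_span f ->
  wave_span (fun x => f x * fejer K (tnth x i - c)).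
Proof.
move=> span_f.
have -> : (fun x => f x * fejer K (tnth x i - c)) =
  (fun x => \sum_(j < K.+1) \sum_(j' < K.+1) ((K.+1)%:R ^+ 2)^-1 * (f x *
     cos (2 * pi * (j%:Z - j'%:Z)%:~R * tnth x i + - (2 * pi * (j%:R - j'%:R) * c)))).
  apply: funext => x; rewrite /fejer mulrCA !mulr_sumr.
  apply: eq_bigr => j _; rewrite !mulr_sumr; apply: eq_bigr => j' _.
  by rewrite intrB -!pmulrn; congr (_ * (_ * cos _)); ring.
by do 2![apply: wave_span_sum => ?]; apply: wave_spanZ; apply: wave_span_mul_cos.
Qed.

Lemma wave_span_mul_prod_fejer K (r : seq 'I_d) (c : 'I_d -> R) f : wave_span f ->
  wave_span (fun x => f x * \prod_(i <- r) fejer K (tnth x i - c i)).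
Proof.
move=> span_f; elim: r => [|i r IHr].
  by under eq_fun do rewrite big_nil mulr1.
under eq_fun do rewrite big_cons mulrCA mulrC.
exact: wave_span_mul_fejer.
Qed.

Definition fejer_test (K : nat) (a : 'I_d -> R) (x : d.-tuple R) : R :=
  \sum_(f : {ffun 'I_d -> 'I_K.+1})
     (\prod_(i < d) fejer K (tnth x i - grid (a i) (f i))) *
     cos (2 * pi * \sum_(i < d) tnth xi i * (grid (a i) (f i) - tnth x i)).

Lemma wave_span_fejer_test K a : wave_span (fejer_test K a).
Proof.
apply: wave_span_sum => f.
have := wave_span_mul_prod_fejer K (index_enum 'I_d) (fun i => grid (a i) (f i))
  (wave_span_cos_diff [tuple grid (a j) (f j) | j < d]).
congr wave_span; apply: funext => x; rewrite mulrC; congr (_ * cos (_ * _)).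
by apply: eq_bigr => i _; rewrite tnth_mktuple.
Qed.

Variable nu : probability (d.-tuple R) R.
Hypothesis fourier_vanishes_xi : forall k : d.-tuple int,
  fourier_vanishes nu (vadd xi [tuple (tnth k i)%:~R | i < d]).

Lemma integrable_wave_eq0 a b k :
  nu.-integrable setT (EFin \o wave a b k) /\ Rintegral nu setT (wave a b k) = 0.
Proof.
set w := vadd xi (intr_tuple k); have [int_cos int_sin] := fourier_vanishes_xi k.
have icos := integrable_trig_vdot nu w (@continuous_cos R) (@cos_max R).
have isin := integrable_trig_vdot nu w (@continuous_sin R) (@sin_max R).
have -> : wave a b k = fun x => (a * cos b) * cos (2 * pi * vdot w x) -
                                 (a * sin b) * sin (2 * pi * vdot w x).
  by apply: funext => x; rewrite /wave cosD; ring.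
have icos' := integrableZl measurableT (a * cos b) icos.
have isin' := integrableZl measurableT (a * sin b) isin.
split; first exact: (integrableB measurableT icos' isin').
by rewrite RintegralB // !RintegralZl // int_cos int_sin !mulr0 subrr.
Qed.

Lemma integrable_wave_span_eq0 f : wave_span f ->
  nu.-integrable setT (EFin \o f) /\ Rintegral nu setT f = 0.
Proof.
move=> [l ->]; elim: l => [|r l [IHint IHeq0]].
  under eq_fun do rewrite big_nil.
  rewrite Rintegral_cst_probability; split=> //.
  by apply: (bounded_integrable nu (M := 0)) => [|x]; rewrite ?normr0.
under eq_fun do rewrite big_cons.
have [int_r eq0_r] := integrable_wave_eq0 r.1.1 r.1.2 r.2.
split; first exact: (integrableD measurableT int_r IHint).
by rewrite RintegralD // eq0_r IHeq0 addr0.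
Qed.

End WaveSpan.

Section ProductWeights.
Variable R : realType.

Lemma prod_ge_1_sub (n : nat) (U : 'I_n -> R) (e : R) : 0 <= e ->
  (forall i, 0 <= U i <= 1) -> (forall i, 1 - e <= U i) ->
  1 - n%:R * e <= \prod_(i < n) U i.
Proof.
move=> e0; elim: n U => [|n IHn] U U01 U1e; first by rewrite big_ord0 mul0r subr0.
rewrite big_ord_recr /= -natr1.
have P01 : 0 <= \prod_(i < n) U (widen_ord (leqnSn n) i) <= 1.
  by rewrite prodr_ge0 ?prodr_ile1 // => i _; case/andP: (U01 (widen_ord (leqnSn n) i)).
have := IHn (fun i => U (widen_ord (leqnSn n) i)) (fun i => U01 _) (fun i => U1e _).
have := U01 ord_max; have := U1e ord_max; move: P01.
set P := \prod_(i < n) _; set u := U ord_max; nra.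
Qed.

(* Expand the product of the [n] probability vectors [w i] over all choices [f]: choices with
   a far coordinate weigh at most [n e2] in total, the others contribute at least [1 - e1]. *)
Lemma sum_prod_weights_ge (n M : nat) (w : 'I_n -> 'I_M -> R) (far : 'I_n -> 'I_M -> bool)
  (c : {ffun 'I_n -> 'I_M} -> R) (e1 e2 : R) :
  0 <= e1 <= 1 -> 0 <= e2 ->
  (forall i s, 0 <= w i s) -> (forall i, \sum_(s < M) w i s = 1) ->
  (forall i, \sum_(s < M | far i s) w i s <= e2) ->
  (forall f, -1 <= c f) ->
  (forall f : {ffun 'I_n -> 'I_M}, (forall i, ~~ far i (f i)) -> 1 - e1 <= c f) ->
  1 - e1 - 2 * n%:R * e2 <= \sum_(f : {ffun 'I_n -> 'I_M}) (\prod_(i < n) w i (f i)) * c f.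
Proof.
move=> /andP[e10 e11] e20 w0 w1 w_far c_geN1 c_near.
pose near i s := w i s * (~~ far i s)%:R.
have le_term (f : {ffun 'I_n -> 'I_M}) :
    (2 - e1) * \prod_(i < n) near i (f i) - \prod_(i < n) w i (f i) <=
    (\prod_(i < n) w i (f i)) * c f.
  have W0 : 0 <= \prod_(i < n) w i (f i) by apply: prodr_ge0.
  have [/forallP f_near|] := boolP [forall i, ~~ far i (f i)].
    rewrite (eq_bigr (fun i => w i (f i))) => [|i _]; last by rewrite /near f_near mulr1.
    have := c_near f f_near; nra.
  rewrite negb_forall => /existsP [i0]; rewrite negbK => far_i0.
  rewrite (bigD1 i0) //= /near far_i0 mulr0 mul0r mulr0.
  have := c_geN1 f; nra.
apply: le_trans (ler_sum _ (fun f _ => le_term f)).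
rewrite sumrB -mulr_sumr -!bigA_distr_bigA /=.
have -> : \prod_(i < n) \sum_(s < M) w i s = 1 by rewrite big1.
pose U i := \sum_(s < M) near i s.
have U_eq i : U i = \sum_(s < M | ~~ far i s) w i s.
  rewrite /U (bigID (far i)) /= big1 ?add0r => [|s far_s]; last by rewrite /near far_s mulr0.
  by apply: eq_bigr => s near_s; rewrite /near near_s mulr1.
have U_far i : U i + \sum_(s < M | far i s) w i s = 1.
  by rewrite U_eq addrC -(w1 i) [RHS](bigID (far i)).
have U01 i : 0 <= U i <= 1.
  have := U_far i; have : 0 <= \sum_(s < M | far i s) w i s by apply: sumr_ge0.
  have : 0 <= U i by rewrite U_eq sumr_ge0.
  by move=> *; apply/andP; split; lra.
have U1e i : 1 - e2 <= U i by have := U_far i; have := w_far i; lra.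
have := prod_ge_1_sub e20 U01 U1e; rewrite -/U.
have : 0 <= n%:R * e2 by apply: mulr_ge0.
nra.
Qed.

End ProductWeights.

Section BoundaryWeight.
Variable R : realType.
Implicit Types c eta s t u v : R.

Lemma max0_lipschitz u v : `|Num.max 0 u - Num.max 0 v| <= `|u - v|.
Proof.
have := ler_norm (u - v); have := ler_norm (v - u); rewrite distrC ler_norml.
by case: (lerP 0 u) => hu; case: (lerP 0 v) => hv h1 h2; apply/andP; split; lra.
Qed.

Lemma min1_lipschitz u v : `|Num.min 1 u - Num.min 1 v| <= `|u - v|.
Proof.
have := ler_norm (u - v); have := ler_norm (v - u); rewrite distrC ler_norml.
by case: (lerP 1 u) => hu; case: (lerP 1 v) => hv h1 h2; apply/andP; split; lra.
Qed.

Definition boundary_weight c eta t : R :=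
  Num.min 1 (Num.max 0 ((c + 4 * eta - t) / (4 * eta)) +
             Num.max 0 ((t - (c + 1 - 8 * eta)) / (4 * eta))).

Lemma boundary_weight_ge0 c eta t : 0 <= boundary_weight c eta t.
Proof. by rewrite /boundary_weight le_min ler01 addr_ge0 // le_max lexx. Qed.

Lemma boundary_weight_le1 c eta t : boundary_weight c eta t <= 1.
Proof. by rewrite /boundary_weight ge_min lexx. Qed.

Lemma boundary_weight_lipschitz c eta s t : 0 < eta ->
  `|boundary_weight c eta s - boundary_weight c eta t| <= `|s - t| / (2 * eta).
Proof.
move=> eta0; apply: le_trans (min1_lipschitz _ _) _.
have e4 : 0 < (4 * eta)^-1 by rewrite invr_gt0 mulr_gt0.
set u1 := (c + 4 * eta - s) / _; set v1 := (c + 4 * eta - t) / _.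
set u2 := (s - _) / _; set v2 := (t - _) / _.
have u1v1 : `|u1 - v1| = `|s - t| / (4 * eta).
  by rewrite /u1 /v1 -mulrBl normrM (gtr0_norm e4) distrC; congr (`|_| * _); ring.
have u2v2 : `|u2 - v2| = `|s - t| / (4 * eta).
  by rewrite /u2 /v2 -mulrBl normrM (gtr0_norm e4); congr (`|_| * _); ring.
rewrite opprD addrACA; apply: le_trans (ler_normD _ _) _.
have := max0_lipschitz u1 v1; have := max0_lipschitz u2 v2; rewrite u1v1 u2v2.
have -> : `|s - t| / (2 * eta) = `|s - t| / (4 * eta) + `|s - t| / (4 * eta).
  by field; rewrite gt_eqF.
lra.
Qed.

Lemma boundary_weight_out c eta t : 0 < eta -> eta <= 1 / 16 ->
  t < c \/ c + 1 - 4 * eta < t -> boundary_weight c eta t = 1.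
Proof.
move=> eta0 eta16 t_out; apply/min_l.
have e4 : 0 < 4 * eta by rewrite mulr_gt0.
set X := (c + 4 * eta - t) / _; set Y := (t - _) / _.
have X0 : 0 <= Num.max 0 X by rewrite le_max lexx.
have Y0 : 0 <= Num.max 0 Y by rewrite le_max lexx.
have XX : X <= Num.max 0 X by rewrite le_max lexx orbT.
have YY : Y <= Num.max 0 Y by rewrite le_max lexx orbT.
case: t_out => [lttc|ltt].
  have : 1 <= X by rewrite ler_pdivlMr //; lra.
  lra.
have : 1 <= Y by rewrite ler_pdivlMr //; lra.
lra.
Qed.

Lemma boundary_weight_in c eta t : 0 < eta ->
  c + 4 * eta <= t -> t <= c + 1 - 8 * eta -> boundary_weight c eta t = 0.
Proof.
move=> eta0 le_t le_t'; have e4 : 0 < (4 * eta)^-1 by rewrite invr_gt0 mulr_gt0.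
rewrite /boundary_weight !max_l ?addr0 ?min_r ?ler01 // pmulr_lle0 //; lra.
Qed.

Lemma measurable_boundary_weight c eta : measurable_fun setT (boundary_weight c eta).
Proof.
apply: measurable_minr; first exact: measurable_cst.
apply: measurable_funD; apply: measurable_maxr; try exact: measurable_cst;
  apply: measurable_funM; try exact: measurable_cst.
- by apply: measurable_funB; [exact: measurable_cst|exact: measurable_id].
- by apply: measurable_funB; [exact: measurable_id|exact: measurable_cst].
Qed.

End BoundaryWeight.

Section EmptyZeroSet.
Variables (R : realType) (d : nat) (m : nat -> 'I_d -> nat)
  (B : nat -> seq (d.-tuple nat)) (nu : probability (d.-tuple R) R) (xi : d.-tuple R).
Hypothesis mB_in_Dd : forall n, in_Dd (m n) (B n).
Hypothesis nu_conv : is_infinite_convolution m B nu.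
Hypothesis fourier_vanishes_xi : forall k : d.-tuple int,
  fourier_vanishes nu (vadd xi [tuple (tnth k i)%:~R | i < d]).

Definition eps : R := cos 1 / (8 * d.+1%:R).

Lemma eps_gt0 : 0 < eps.
Proof. by rewrite divr_gt0 ?cos1_gt0 ?mulr_gt0 ?ltr0n. Qed.

Lemma eps_small : 4 * d%:R * eps <= cos 1 / 2.
Proof.
have c1 := cos1_gt0 R; have d0 : 0 <= d%:R :> R by [].
rewrite /eps mulrA ler_pdivrMr ?mulr_gt0 ?ltr0n // -natr1; nra.
Qed.

Definition depth : nat := Num.Def.archi_bound (eps * eps)^-1.

Lemma quarter_exp_depth : (1 / 4) ^+ depth <= eps * eps.
Proof.
have e0 : 0 < eps * eps by rewrite mulr_gt0 ?eps_gt0.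
have : 0 <= (eps * eps)^-1 by rewrite invr_ge0 ltW.
move=> /archi_boundP; rewrite -/depth => lt_depth.
have : depth%:R < 4%:R ^+ depth :> R by rewrite -natrX ltr_nat ltn_expl.
rewrite expr_div_n expr1n mul1r -[eps * eps]invrK lef_pV2 ?posrE ?invr_gt0 ?exprn_gt0 //.
by move=> /(lt_trans lt_depth) /ltW.
Qed.

(* Whether the atoms of depth [depth] carry little mass near the face [x_i = 1]. *)
Definition top_face (i : 'I_d) : bool := \prod_(j < depth) top_freq R m B i j <= eps.

Lemma bottom_freq_prod_le i : ~~ top_face i -> \prod_(j < depth) bottom_freq R B i j <= eps.
Proof.
rewrite /top_face -ltNge => lt_top; rewrite leNgt; apply/negP => lt_bot.
have : \prod_(j < depth) top_freq R m B i j * \prod_(j < depth) bottom_freq R B i j <=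
    (1 / 4) ^+ depth.
  rewrite -big_split /= -[depth in X in _ <= X]card_ord -prodr_const.
  apply: ler_prod => j _.
  by rewrite mulr_ge0 ?top_freq_ge0 ?bottom_freq_ge0 ?top_bottom_freq_le.
have := quarter_exp_depth; have := eps_gt0.
have : eps * eps < \prod_(j < depth) top_freq R m B i j * \prod_(j < depth) bottom_freq R B i j.
  by rewrite ltr_pM ?ltW ?eps_gt0.
lra.
Qed.

Definition theta : R := (2 * pi * (\sum_(i < d) `|tnth xi i| + 1))^-1.

Lemma theta_gt0 : 0 < theta.
Proof. by rewrite invr_gt0 !mulr_gt0 ?pi_gt0 ?ltr_pwDr ?sumr_ge0. Qed.

Lemma theta_small : 2 * pi * (\sum_(i < d) `|tnth xi i| * theta) <= 1.
Proof.
have S0 : 0 <= \sum_(i < d) `|tnth xi i| by rewrite sumr_ge0.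
have pi0 := pi_gt0 R; rewrite -mulr_suml.
have -> : 2 * pi * ((\sum_(i < d) `|tnth xi i|) * theta) =
    (\sum_(i < d) `|tnth xi i|) / (\sum_(i < d) `|tnth xi i| + 1).
  by rewrite /theta; field; rewrite !gt_eqF //; lra.
rewrite ler_pdivrMr; lra.
Qed.

(* Small against both the cell size [1 / (R_depth ... R_1)_ii] and [1 / |xi|_1]. *)
Definition eta (i : 'I_d) : R := Num.min ((digit_scale R m i depth)^-1 / 16) theta.

Lemma eta_gt0 i : 0 < eta i.
Proof. by rewrite lt_min theta_gt0 andbT divr_gt0 // (inv_digit_scale_gt0 R mB_in_Dd). Qed.

Lemma eta_le_cell i : 16 * eta i <= (digit_scale R m i depth)^-1.
Proof.
have : eta i <= (digit_scale R m i depth)^-1 / 16 by rewrite ge_min lexx.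
by rewrite ler_pdivlMr // mulrC.
Qed.

Lemma eta_le_theta i : eta i <= theta.
Proof. by rewrite ge_min lexx orbT. Qed.

Lemma eta_small i : eta i <= 1 / 16.
Proof.
have : (digit_scale R m i depth)^-1 <= 1.
  by rewrite invf_le1 ?(digit_scale_gt0 R mB_in_Dd) ?(digit_scale_ge1 R mB_in_Dd).
have := eta_le_cell i; lra.
Qed.

(* The window [[corner i, corner i + 1 - 4 eta i]] avoids the face of [[0, 1]] carrying
   little mass. *)
Definition corner (i : 'I_d) : R := if top_face i then - (8 * eta i) else 8 * eta i.

Definition penalty (x : d.-tuple R) : R :=
  \sum_(i < d) boundary_weight (corner i) (eta i) (tnth x i).

Lemma penalty_bounds x : 0 <= penalty x <= d%:R.
Proof.
rewrite sumr_ge0 => [|i _]; last exact: boundary_weight_ge0.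
have -> : d%:R = \sum_(i < d) (1 : R) by rewrite sumr_const card_ord.
by apply: ler_sum => i _; apply: boundary_weight_le1.
Qed.

Lemma measurable_penalty : measurable_fun setT penalty.
Proof.
apply: measurable_sum => i; apply: measurableT_comp (measurable_boundary_weight _ _) _.
exact: measurable_tnth.
Qed.

Lemma continuous_penalty : continuous_Rd penalty.
Proof.
move=> x e e0; pose lip := \sum_(i < d) (2 * eta i)^-1.
have lip0 : 0 <= lip by rewrite sumr_ge0 // => i _; rewrite invr_ge0 mulr_ge0 ?ltW ?eta_gt0.
exists (e / (lip + 1)) => [|y near_y]; first by rewrite divr_gt0 //; lra.
rewrite -sumrB; apply: le_lt_trans (ler_norm_sum _ _ _) _.
apply: (@le_lt_trans _ _ (\sum_(i < d) e / (lip + 1) * (2 * eta i)^-1)).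
  apply: ler_sum => i _; apply: le_trans (boundary_weight_lipschitz _ _ _ (eta_gt0 i)) _.
  by rewrite ler_pM2r ?invr_gt0 ?mulr_gt0 ?eta_gt0 // ltW.
rewrite -mulr_sumr -/lip mulrAC ltr_pdivrMr; last lra.
by rewrite ltr_pM2l //; lra.
Qed.

Lemma fin_conv_penalty_le n : (depth <= n)%N ->
  fin_conv_integral m B n penalty <= d%:R * eps.
Proof.
move=> le_depth_n; rewrite fin_conv_integral_sum.
have -> : d%:R * eps = \sum_(i < d) eps by rewrite sumr_const card_ord mulr_natl.
apply: ler_sum => i _; rewrite -(subnKC le_depth_n).
have eta0 := eta_gt0 i; have eta_cell := eta_le_cell i.
have inv_scale0 := inv_digit_scale_gt0 R mB_in_Dd i (depth + (n - depth)).
rewrite /corner; case: ifPn => [top|/bottom_freq_prod_le bottom].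
  apply: le_trans (fin_conv_top_le mB_in_Dd (i := i) ler01 _) _; last by rewrite mul1r.
  move=> z /andP[z0 z1]; rewrite boundary_weight_ge0 boundary_weight_le1.
  by split=> // z_le; apply: boundary_weight_in => //; lra.
apply: le_trans (fin_conv_bottom_le mB_in_Dd (i := i) ler01 _) _; last by rewrite mul1r.
move=> z /andP[z0 z1]; rewrite boundary_weight_ge0 boundary_weight_le1.
by split=> // le_z; apply: boundary_weight_in => //; lra.
Qed.

Lemma integral_penalty_le : Rintegral nu setT penalty <= d%:R * eps.
Proof.
have bounded_penalty : bounded_Rd penalty.
  by exists d%:R => x; have /andP[p0 pd] := penalty_bounds x; rewrite ger0_norm.
have conv := nu_conv measurable_penalty continuous_penalty bounded_penalty.
rewrite -(cvg_lim (@Rhausdorff R) conv); apply: limr_le; first exact: cvgP conv.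
by exists depth => // n /= /fin_conv_penalty_le.
Qed.

Lemma one_sub_cos_eta_gt0 i : 0 < 1 - cos (2 * pi * eta i).
Proof. by rewrite one_sub_cos2pi_gt0 // eta_gt0 /=; have := eta_small i; lra. Qed.

Definition order : nat :=
  Num.Def.archi_bound (\sum_(i < d) 2 / (eps * (1 - cos (2 * pi * eta i)))).

Lemma far_grid_mass_le i :
  (order.+1)%:R * (2 / ((order.+1)%:R ^+ 2 * (1 - cos (2 * pi * eta i)))) <= eps.
Proof.
have c0 := one_sub_cos_eta_gt0 i; have e0 := eps_gt0; have k0 : 0 < order.+1%:R :> R by [].
pose Kb := \sum_(j < d) 2 / (eps * (1 - cos (2 * pi * eta j))).
have Kb_ge j : 0 <= 2 / (eps * (1 - cos (2 * pi * eta j))).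
  by rewrite divr_ge0 // mulr_ge0 // ltW // one_sub_cos_eta_gt0.
have : 2 / (eps * (1 - cos (2 * pi * eta i))) <= (order.+1)%:R.
  have lt_order : Kb < order%:R by apply: archi_boundP; rewrite sumr_ge0.
  apply: le_trans (ltW (lt_le_trans lt_order _)); last by rewrite ler_nat.
  by rewrite /Kb (bigD1 i) //= lerDl sumr_ge0.
rewrite (ler_pdivrMr _ _ (mulr_gt0 e0 c0)) => le_order.
have -> : order.+1%:R * (2 / (order.+1%:R ^+ 2 * (1 - cos (2 * pi * eta i)))) =
    2 / (order.+1%:R * (1 - cos (2 * pi * eta i))) by field; rewrite !gt_eqF.
by rewrite (ler_pdivrMr _ _ (mulr_gt0 k0 c0)); nra.
Qed.

Definition offset (i : 'I_d) : R := corner i - 2 * eta i.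

Definition test : d.-tuple R -> R := fejer_test xi order offset.

Definition in_window (x : d.-tuple R) : bool :=
  [forall i, corner i <= tnth x i <= corner i + 1 - 4 * eta i].

Lemma test_ge_window x : in_window x -> cos 1 - 2 * d%:R * eps <= test x.
Proof.
move=> /forallP x_in; have c1 := cos1_gt0 R.
have := @sum_prod_weights_ge R d order.+1
  (fun i s => fejer order (tnth x i - grid (offset i) s))
  (fun i s => eta i < `|tnth x i - grid (offset i) s|)
  (fun f => cos (2 * pi * \sum_(i < d) tnth xi i * (grid (offset i) (f i) - tnth x i)))
  (1 - cos 1) eps.
rewrite (_ : 1 - (1 - cos 1) = cos 1); last by ring.
apply.
- by rewrite subr_ge0 cos_le1 /=; lra.
- exact: ltW eps_gt0.
- by move=> i s; apply: fejer_ge0.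
- by move=> i; apply: sum_fejer_grid.
- move=> i; apply: le_trans (far_grid_mass_le i).
  set C := 2 / _; have C0 : 0 <= C.
    by rewrite divr_ge0 // mulr_ge0 ?exprn_ge0 // ltW // one_sub_cos_eta_gt0.
  have -> : order.+1%:R * C = \sum_(s < order.+1) C by rewrite sumr_const card_ord mulr_natl.
  rewrite [X in _ <= X](bigID (fun s => eta i < `|tnth x i - grid (offset i) s|)) /=.
  rewrite -[X in X <= _]addr0 lerD ?sumr_ge0 //; apply: ler_sum => s far_s.
  have eta_bnd : 0 < eta i <= 1 / 2 by rewrite eta_gt0 /=; have := eta_small i; lra.
  apply: (fejer_far order eta_bnd (ltW far_s)).
  have s0 : 0 <= s%:R / (order.+1)%:R :> R by rewrite divr_ge0.
  have s1 : s%:R / (order.+1)%:R < 1 :> R by rewrite ltr_pdivrMr ?ltr0n // mul1r ltr_nat.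
  have /andP[x_lo x_hi] := x_in i; have := eta_gt0 i.
  rewrite /grid /offset ler_norml => eta0; set t := s%:R / _ in s0 s1 *.
  by set y := tnth x i in x_lo x_hi *; apply/andP; split; lra.
- by move=> f; apply: cos_geN1.
- move=> f near_f; apply: cos1_le_cos.
  rewrite normrM ger0_norm ?mulr_ge0 ?pi_ge0 //; apply: le_trans theta_small.
  rewrite ler_pM2l ?mulr_gt0 ?pi_gt0 //; apply: le_trans (ler_norm_sum _ _ _) _.
  apply: ler_sum => i _; rewrite normrM ler_wpM2l // distrC.
  by rewrite (le_trans _ (eta_le_theta i)) // leNgt near_f.
Qed.

Lemma test_geN1 x : -1 <= test x.
Proof.
pose W (f : {ffun 'I_d -> 'I_order.+1}) :=
  \prod_(i < d) fejer order (tnth x i - grid (offset i) (f i)).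
have -> : -1 = \sum_f - W f.
  rewrite sumrN /W -(bigA_distr_bigA (fun i s => fejer order (tnth x i - grid (offset i) s))).
  by rewrite big1 // => i _; apply: sum_fejer_grid.
apply: ler_sum => f _; have W0 : 0 <= W f by apply: prodr_ge0 => i _; apply: fejer_ge0.
by rewrite -mulrN1 ler_wpM2l ?cos_geN1.
Qed.

Lemma test_ge_penalty x : cos 1 - 2 * d%:R * eps - 2 * penalty x <= test x.
Proof.
have /andP[p0 _] := penalty_bounds x.
have [/test_ge_window|] := boolP (in_window x); first lra.
rewrite negb_forall => /existsP [i]; rewrite negb_and -!ltNge => /orP x_out.
have : boundary_weight (corner i) (eta i) (tnth x i) = 1.
  by apply: boundary_weight_out; rewrite ?eta_gt0 ?eta_small.
have : boundary_weight (corner i) (eta i) (tnth x i) <= penalty x.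
  by rewrite /penalty (bigD1 i) //= lerDl sumr_ge0 // => j _; apply: boundary_weight_ge0.
have := test_geN1 x; have := cos_le1 (1 : R); have := eps_gt0.
have : 0 <= d%:R :> R by []; nra.
Qed.

Lemma zero_set_contra : False.
Proof.
have [int_test test_eq0] := integrable_wave_span_eq0 fourier_vanishes_xi
  (wave_span_fejer_test xi order offset).
have int_penalty : nu.-integrable setT (EFin \o penalty).
  apply: (bounded_integrable nu (M := d%:R) measurable_penalty) => x.
  by have /andP[p0 pd] := penalty_bounds x; rewrite ger0_norm.
have int_2penalty : nu.-integrable setT (EFin \o (fun x => 2 * penalty x)).
  exact: (integrableZl measurableT 2 int_penalty).
have int_cst : nu.-integrable setT (EFin \o (fun=> cos 1 - 2 * d%:R * eps)).
  exact: (bounded_integrable nu (M := `|cos 1 - 2 * d%:R * eps|) (measurable_cst _)).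
have := le_Rintegral measurableT (integrableB measurableT int_cst int_2penalty) int_test
  (fun x _ => test_ge_penalty x).
rewrite test_eq0 RintegralB // Rintegral_cst_probability RintegralZl //.
have := integral_penalty_le; have := eps_small; have := cos1_gt0 R; lra.
Qed.

End EmptyZeroSet.

Theorem corollary4p3 (R : realType) (d : nat) (m : nat -> 'I_d -> nat)
  (B : nat -> seq (d.-tuple nat)) (nu : probability (d.-tuple R) R) :
  (forall n, in_Dd (m n) (B n)) ->
  is_infinite_convolution m B nu ->
  Zset nu = set0.
Proof.
move=> mB_in_Dd nu_conv; apply/seteqP; split => // xi xi_in_Z.
exact: (zero_set_contra mB_in_Dd nu_conv xi_in_Z).
Qed.
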